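(* There is no finite set $\mathsf{Ax}$ of finitary $\Delta$-quasiequations that is both sound and complete for discrete sequence algebras; i.e. for every finite set $\mathsf{Ax}$ of finitary $\Delta$-quasiequations all valid for discrete sequence algebras, there exists a finitary $\Delta$-quasiequation valid for discrete sequence algebras that is not $\mathsf{Ax}$-provable.
   Context: $\Delta$ is the signature with two unary operation symbols $\ominus$ and $\bigcirc$. Terms are built from a countably infinite set of variables. A discrete sequence algebra is the set $A^\omega$ of all sequences over an arbitrary set $A$, with $\ominus(\varphi)=(\varphi(0),\varphi(0),\ldots)$ and $\bigcirc(\varphi)=(\varphi(1),\varphi(2),\ldots)$. A finitary quasiequation is $P\Rightarrow s=t$ with $P$ a finite set of identities between terms; it is valid if in every discrete sequence algebra and every assignment of variables to elements, if all identities of $P$ hold then $s=t$ holds. $\mathsf{Ax}_=$ consists of the quasiequations of equational logic: $\Rightarrow x=x$; $x=y\Rightarrow y=x$; $x=y,y=z\Rightarrow x=z$; $x=y\Rightarrow \mathsf f(x)=\mathsf f(y)$ for $\mathsf f\in\{\ominus,\bigcirc\}$. A proof of $P\Rightarrow s=t$ from $\mathsf{Ax}$ is a finite tree labelled by identities, with root $s=t$, each inner node with label $u=v$ and children $u_1=v_1,\ldots,u_n=v_n$ forming a substitution instance $u_1=v_1,\ldots,u_n=v_n\Rightarrow u=v$ of a quasiequation in $\mathsf{Ax}\cup\mathsf{Ax}_=$, and each leaf labelled either by an identity of $P$ or a substitution instance of a premise-free quasiequation of $\mathsf{Ax}\cup\mathsf{Ax}_=$. $P\Rightarrow s=t$ is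 $\mathsf{Ax}$-provable if such a proof exists. *)

From Stdlib Require Import List.
Import ListNotations.

(* Terms over the signature Delta = {ominus, bigcirc} (two unary symbols),
   with countably many variables indexed by nat. *)
Inductive term : Type :=
| Var : nat -> term
| Ominus : term -> term
| Next : term -> term.

Definition identity : Type := (term * term)%type.

Record quasiequation : Type := QE { qe_prem : list identity; qe_concl : identity }.

(* Discrete sequence algebra A^omega: sequences are functions nat -> A. *)
Definition ds_ominus {A : Type} (phi : nat -> A) : nat -> A := fun _ => phi 0.
Definition ds_next {A : Type} (phi : nat -> A) : nat -> A := fun n => phi (S n).

Fixpoint eval {A : Type} (v : nat -> (nat -> A)) (t : term) : nat -> A :=
  match t with
  | Var x => v x
  | Ominus u => ds_ominus (eval v u)
  | Next u => ds_next (eval v u)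
  end.

Definition holds {A : Type} (v : nat -> (nat -> A)) (e : identity) : Prop :=
  eval v (fst e) = eval v (snd e).

Definition valid (q : quasiequation) : Prop :=
  forall (A : Type) (v : nat -> (nat -> A)),
    (forall e, In e (qe_prem q) -> holds v e) -> holds v (qe_concl q).

Fixpoint subst (sg : nat -> term) (t : term) : term :=
  match t with
  | Var x => sg x
  | Ominus u => Ominus (subst sg u)
  | Next u => Next (subst sg u)
  end.

Definition subst_id (sg : nat -> term) (e : identity) : identity :=
  (subst sg (fst e), subst sg (snd e)).

Definition Ax_eq : list quasiequation :=
  [ QE [] (Var 0, Var 0);
    QE [(Var 0, Var 1)] (Var 1, Var 0);
    QE [(Var 0, Var 1); (Var 1, Var 2)] (Var 0, Var 2);
    QE [(Var 0, Var 1)] (Ominus (Var 0), Ominus (Var 1));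
    QE [(Var 0, Var 1)] (Next (Var 0), Next (Var 1)) ].

(* Leaves are identities of P or substitution instances of
   premise-free quasiequations (the case of empty premise list below). *)
Inductive provable (Ax : list quasiequation) (P : list identity) : identity -> Prop :=
| prov_hyp : forall e, In e P -> provable Ax P e
| prov_rule : forall (q : quasiequation) (sg : nat -> term),
    In q (Ax ++ Ax_eq) ->
    (forall e, In e (qe_prem q) -> provable Ax P (subst_id sg e)) ->
    provable Ax P (subst_id sg (qe_concl q)).

From Stdlib Require Import List Arith Lia FunctionalExtensionality Classical.
Import ListNotations.

(* For [n > 0] the quasiequation [periodic_qe n]
     x^(n) = x,  ⊖ x^(i) = ⊖ x (i < n)  ==>  ⊖ x = x
   is valid: x is n-periodic and constant on its first period.  It fails in
   the algebra C_n consisting of an n-cycle under ○ together with one extra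
   point ⊥ that is the value of every ⊖-term, while C_n satisfies equational
   logic; so it suffices that C_n satisfies every quasiequation of Ax once n
   is large.  A valuation in C_n uses at most V cycle points and a term of
   size at most D moves them along at most D steps, so for n > V (D + 1) some
   cycle point g is never reached.  Cutting the cycle at g embeds everything
   reached into a sequence algebra: the point at distance d before g becomes
   a sequence that is 0 for d steps and injective afterwards, and ⊥ becomes
   the constant 0 sequence.  The valid quasiequations of Ax transfer back
   along this embedding. *)

Definition nexts (i : nat) (t : term) : term := Nat.iter i Next t.

Fixpoint term_size (t : term) : nat :=
  match t with
  | Var _ => 0
  | Ominus u | Next u => S (term_size u)
  end.

Fixpoint term_var (t : term) : nat :=
  match t with
  | Var x => x
  | Ominus u | Next u => term_var u
  end.

Definition qe_terms (q : quasiequation) : list term :=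
  flat_map (fun e => [fst e; snd e]) (qe_concl q :: qe_prem q).

Lemma in_qe_terms q e :
  In e (qe_concl q :: qe_prem q) -> In (fst e) (qe_terms q) /\ In (snd e) (qe_terms q).
Proof.
  intro He; split; apply in_flat_map; exists e; split; simpl; auto.
Qed.

Lemma eval_nexts (A : Type) (v : nat -> nat -> A) i t k :
  eval v (nexts i t) k = eval v t (i + k).
Proof.
  revert k; induction i as [|i IH]; intro k; [reflexivity|].
  unfold nexts; rewrite Nat.iter_succ; simpl; unfold ds_next.
  fold (nexts i t); rewrite IH; f_equal; lia.
Qed.

Lemma periodic_constant (A : Type) (f : nat -> A) n :
  0 < n -> (forall k, f (n + k) = f k) -> (forall i, i < n -> f i = f 0) ->
  forall k, f k = f 0.
Proof.
  intros Hn Hper Hfirst k.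
  induction k as [k IH] using (well_founded_induction lt_wf).
  destruct (Nat.lt_ge_cases k n) as [Hk|Hk]; [auto|].
  replace k with (n + (k - n)) by lia; rewrite Hper; apply IH; lia.
Qed.

Definition periodic_qe (n : nat) : quasiequation :=
  QE ((nexts n (Var 0), Var 0) ::
        map (fun i => (Ominus (nexts i (Var 0)), Ominus (Var 0))) (seq 0 n))
     (Ominus (Var 0), Var 0).

Lemma periodic_qe_valid n : 0 < n -> valid (periodic_qe n).
Proof.
  intros Hn A v Hprem; unfold holds; simpl.
  assert (Hper : forall k, v 0 (n + k) = v 0 k).
  { intro k; pose proof (equal_f (Hprem _ (in_eq _ _)) k) as Hk.
    unfold holds in Hk; simpl in Hk; rewrite eval_nexts in Hk; exact Hk. }
  assert (Hfirst : forall i, i < n -> v 0 i = v 0 0).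
  { intros i Hi.
    assert (Hin : In (Ominus (nexts i (Var 0)), Ominus (Var 0)) (qe_prem (periodic_qe n))).
    { right; apply in_map_iff; exists i; split; [reflexivity|apply in_seq; lia]. }
    pose proof (equal_f (Hprem _ Hin) 0) as H0.
    unfold holds in H0; simpl in H0; unfold ds_ominus in H0.
    rewrite eval_nexts, Nat.add_0_r in H0; exact H0. }
  apply functional_extensionality; intro k; unfold ds_ominus.
  symmetry; apply periodic_constant with n; assumption.
Qed.

(* Elements are [Some e] for a cycle point [e < n] and [None] for ⊥. *)
Definition cyc_succ (n e : nat) : nat := if S e <? n then S e else 0.

Fixpoint evalC (n : nat) (v : nat -> option nat) (t : term) : option nat :=
  match t with
  | Var x => v x
  | Ominus _ => None
  | Next u => option_map (cyc_succ n) (evalC n v u)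
  end.

Definition holdsC (n : nat) (v : nat -> option nat) (e : identity) : Prop :=
  evalC n v (fst e) = evalC n v (snd e).

Definition bounded (n : nat) (o : option nat) : Prop :=
  match o with None => True | Some e => e < n end.

Definition satC (n : nat) (q : quasiequation) : Prop :=
  forall v, (forall x, bounded n (v x)) ->
    (forall e, In e (qe_prem q) -> holdsC n v e) -> holdsC n v (qe_concl q).

Lemma cyc_succ_lt n e : e < n -> cyc_succ n e < n.
Proof. unfold cyc_succ; destruct (Nat.ltb_spec (S e) n); lia. Qed.

Lemma iter_cyc_succ_0 n k : k < n -> Nat.iter k (cyc_succ n) 0 = k.
Proof.
  induction k as [|k IH]; intro Hk; [reflexivity|].
  rewrite Nat.iter_succ, IH by lia; unfold cyc_succ.
  destruct (Nat.ltb_spec (S k) n); lia.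
Qed.

Lemma evalC_bounded n v t : (forall x, bounded n (v x)) -> bounded n (evalC n v t).
Proof.
  intro Hv; induction t as [x|t _|t IH]; simpl; auto.
  destruct (evalC n v t); simpl in *; auto using cyc_succ_lt.
Qed.

Lemma evalC_subst n v sg t :
  evalC n v (subst sg t) = evalC n (fun x => evalC n v (sg x)) t.
Proof. induction t as [x|t IH|t IH]; simpl; try rewrite IH; reflexivity. Qed.

Lemma evalC_nexts n v i t :
  evalC n v (nexts i t) = option_map (Nat.iter i (cyc_succ n)) (evalC n v t).
Proof.
  induction i as [|i IH]; [unfold nexts; simpl; now destruct (evalC n v t)|].
  unfold nexts; rewrite Nat.iter_succ; simpl; fold (nexts i t); rewrite IH.
  now destruct (evalC n v t).
Qed.

Lemma evalC_shape n v t :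
  evalC n v t = None \/
  exists k m, k <= term_size t /\ v (term_var t) = Some m /\
              evalC n v t = Some (Nat.iter k (cyc_succ n) m).
Proof.
  induction t as [x|t _|t IH]; simpl; auto.
  - destruct (v x) as [m|]; auto. right; exists 0, m; auto.
  - destruct IH as [-> | (k & m & Hk & Hm & ->)]; auto.
    right; exists (S k), m; rewrite Nat.iter_succ; repeat split; auto; lia.
Qed.

Lemma Ax_eq_satC n q : In q Ax_eq -> satC n q.
Proof.
  intros Hq v _ Hprem; unfold holdsC in *.
  destruct Hq as [<-|[<-|[<-|[<-|[<-|[]]]]]]; simpl in *.
  - reflexivity.
  - symmetry; apply (Hprem (Var 0, Var 1)); auto.
  - transitivity (v 1); [apply (Hprem (Var 0, Var 1)) | apply (Hprem (Var 1, Var 2))]; auto.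
  - reflexivity.
  - f_equal; apply (Hprem (Var 0, Var 1)); auto.
Qed.

Lemma provable_satC n Ax P e :
  (forall q, In q Ax -> satC n q) -> provable Ax P e -> satC n (QE P e).
Proof.
  intros HAx Hpr v Hv HP; simpl in HP.
  induction Hpr as [e He|q sg Hq _ IH]; [auto|].
  unfold holdsC, subst_id; simpl; rewrite !evalC_subst.
  assert (Hsat : satC n q).
  { apply in_app_or in Hq; destruct Hq; auto using Ax_eq_satC. }
  apply Hsat; [intro x; apply evalC_bounded; exact Hv|].
  intros e He; specialize (IH e He).
  unfold holdsC, subst_id in IH; simpl in IH; rewrite !evalC_subst in IH; exact IH.
Qed.

Lemma periodic_qe_not_satC n : 0 < n -> ~ satC n (periodic_qe n).
Proof.
  intros Hn Hsat.
  assert (Hc : holdsC n (fun _ => Some 0) (qe_concl (periodic_qe n))).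
  { apply Hsat; [intro; simpl; lia|].
    intros e [<-|He].
    - unfold holdsC; simpl; rewrite evalC_nexts; simpl.
      destruct n as [|n]; [lia|].
      rewrite Nat.iter_succ, iter_cyc_succ_0 by lia.
      unfold cyc_succ; rewrite Nat.ltb_irrefl; reflexivity.
    - apply in_map_iff in He; destruct He as (i & <- & _); reflexivity. }
  discriminate Hc.
Qed.

Section Embedding.

Variables n g : nat.
Hypothesis g_lt_n : g < n.

(* Position of [e] on the cycle cut open just after [g]; [g] itself gets [n - 1]. *)
Definition rot (e : nat) : nat := if g <? e then e - S g else e + n - S g.

Definition stair (k : nat) : nat := if k <? n - 1 then 0 else S k.

Definition embed (o : option nat) : nat -> nat :=
  match o with
  | None => fun _ => 0
  | Some e => fun k => stair (rot e + k)
  end.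

Lemma rot_lt e : e < n -> e <> g -> rot e < n - 1.
Proof. unfold rot; destruct (Nat.ltb_spec g e); lia. Qed.

Lemma rot_cyc_succ e : e < n -> e <> g -> rot (cyc_succ n e) = S (rot e).
Proof.
  intros He Heg; unfold cyc_succ, rot.
  destruct (Nat.ltb_spec (S e) n); destruct (Nat.ltb_spec g e);
    try destruct (Nat.ltb_spec g (S e)); try destruct (Nat.ltb_spec g 0); lia.
Qed.

Lemma rot_inj e e' : e < n -> e' < n -> rot e = rot e' -> e = e'.
Proof. unfold rot; destruct (Nat.ltb_spec g e), (Nat.ltb_spec g e'); lia. Qed.

Lemma embed_inj a b : bounded n a -> bounded n b -> embed a = embed b -> a = b.
Proof.
  intros Ha Hb Hab; pose proof (equal_f Hab n) as Hn; unfold embed, stair in Hn.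
  destruct a as [e|], b as [e'|]; simpl in *; auto;
    repeat match type of Hn with context [?x <? ?y] => destruct (Nat.ltb_spec x y) end;
    try lia.
  f_equal; apply rot_inj; auto; lia.
Qed.

Lemma ominus_embed o : bounded n o -> o <> Some g -> ds_ominus (embed o) = embed None.
Proof.
  intros Ho Hg; destruct o as [e|]; [|reflexivity].
  apply functional_extensionality; intro k; unfold ds_ominus, embed, stair.
  assert (rot e < n - 1) by (apply rot_lt; auto; congruence).
  destruct (Nat.ltb_spec (rot e + 0) (n - 1)); lia.
Qed.

Lemma next_embed o :
  bounded n o -> o <> Some g -> ds_next (embed o) = embed (option_map (cyc_succ n) o).
Proof.
  intros Ho Hg; destruct o as [e|]; [|reflexivity].
  apply functional_extensionality; intro k; unfold ds_next; simpl.
  rewrite rot_cyc_succ by (auto; congruence); f_equal; lia.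
Qed.

Lemma eval_embed v t :
  (forall x, bounded n (v x)) ->
  (forall m k, v (term_var t) = Some m -> k <= term_size t -> Nat.iter k (cyc_succ n) m <> g) ->
  eval (fun x => embed (v x)) t = embed (evalC n v t).
Proof.
  intros Hv; induction t as [x|t IH|t IH]; intro Havoid; [reflexivity| |];
    simpl in Havoid |- *; rewrite IH by (intros m k Hm Hk; apply Havoid; auto; lia);
    assert (Hne : evalC n v t <> Some g) by
      (destruct (evalC_shape n v t) as [-> | (k & m & Hk & Hm & ->)];
       [discriminate | intro Heq; injection Heq; apply Havoid; auto]).
  - apply ominus_embed; auto using evalC_bounded.
  - apply next_embed; auto using evalC_bounded.
Qed.

End Embedding.

Lemma length_flat_map_le (A B : Type) (f : A -> list B) l c :
  (forall x, length (f x) <= c) -> length (flat_map f l) <= length l * c.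
Proof.
  intro Hf; induction l as [|a l IH]; simpl; [lia|].
  rewrite length_app; specialize (Hf a); lia.
Qed.

Lemma exists_lt_not_In (l : list nat) n : length l < n -> exists g, g < n /\ ~ In g l.
Proof.
  intro Hl; apply NNPP; intro Hnone.
  assert (Hincl : incl (seq 0 n) l).
  { intros g Hg; apply in_seq in Hg; apply NNPP; intro Hg'.
    apply Hnone; exists g; split; [lia|exact Hg']. }
  pose proof (NoDup_incl_length (seq_NoDup n 0) Hincl); rewrite length_seq in *; lia.
Qed.

Definition reach (n D V : nat) (v : nat -> option nat) : list nat :=
  flat_map (fun x => match v x with
                     | Some m => map (fun k => Nat.iter k (cyc_succ n) m) (seq 0 (S D))
                     | None => []
                     end) (seq 0 V).

Lemma length_reach n D V v : length (reach n D V v) <= V * S D.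
Proof.
  unfold reach; rewrite <- (length_seq V 0) at 2; apply length_flat_map_le.
  intro x; destruct (v x); simpl; [rewrite length_map, length_seq|]; lia.
Qed.

Lemma in_reach n D V v x m k :
  x < V -> v x = Some m -> k <= D -> In (Nat.iter k (cyc_succ n) m) (reach n D V v).
Proof.
  intros Hx Hm Hk; apply in_flat_map; exists x; split; [apply in_seq; lia|].
  rewrite Hm; apply in_map_iff; exists k; split; [reflexivity|apply in_seq; lia].
Qed.

Lemma valid_satC n D V q :
  valid q -> (forall t, In t (qe_terms q) -> term_size t <= D /\ term_var t < V) ->
  V * S D < n -> satC n q.
Proof.
  intros Hq Hbd Hn v Hv Hprem.
  destruct (exists_lt_not_In (reach n D V v) n) as (g & Hg & Hgap).
  { pose proof (length_reach n D V v); lia. }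
  assert (Htr : forall t, In t (qe_terms q) ->
            eval (fun x => embed n g (v x)) t = embed n g (evalC n v t)).
  { intros t Ht; destruct (Hbd t Ht); apply eval_embed; auto.
    intros m k Hm Hk <-; apply Hgap, (in_reach n D V v (term_var t)); auto; lia. }
  apply (embed_inj n g); auto using evalC_bounded.
  destruct (in_qe_terms q (qe_concl q) (in_eq _ _)) as [Hl Hr].
  rewrite <- (Htr _ Hl), <- (Htr _ Hr); apply (Hq nat (fun x => embed n g (v x))).
  intros e He; destruct (in_qe_terms q e (in_cons _ _ _ He)) as [He1 He2].
  unfold holds; rewrite (Htr _ He1), (Htr _ He2); f_equal; apply Hprem, He.
Qed.

Lemma le_list_max x l : In x l -> x <= list_max l.
Proof.
  intro Hx; assert (Hall : Forall (fun k => k <= list_max l) l) by (apply list_max_le; lia).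
  rewrite Forall_forall in Hall; auto.
Qed.

Theorem mainTheorem14 :
  forall Ax : list quasiequation,
    (forall q, In q Ax -> valid q) ->
    exists q : quasiequation, valid q /\ ~ provable Ax (qe_prem q) (qe_concl q).
Proof.
  intros Ax HAx.
  set (ts := flat_map qe_terms Ax).
  set (D := list_max (map term_size ts)).
  set (V := S (list_max (map term_var ts))).
  set (n := S (V * S D)).
  exists (periodic_qe n); split; [apply periodic_qe_valid; lia|].
  intro Hpr; apply (periodic_qe_not_satC n); [lia|].
  apply (provable_satC n Ax); [|exact Hpr].
  intros q Hq; apply (valid_satC n D V); [auto| |lia].
  intros t Ht; assert (Hts : In t ts) by (apply in_flat_map; eauto).
  split; [|apply Nat.lt_succ_r]; apply le_list_max, in_map, Hts.
Qed.
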